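(* The smallest $q\in(0,1)$ for which there exists exactly one $S$-gap shift with entropy $q$ is $q=\log\lambda_{KL}\approx0.580$, where $\lambda_{KL}\approx1.787$ is the unique solution $\lambda\in(1,2)$ of $\sum_{j=1}^\infty\omega_j\lambda^{-j}=1$ and $(\omega_j)_{j\ge0}$ is the Thue–Morse sequence.
   Context: The Thue–Morse sequence $(\omega_j)_{j\ge0}$ is defined by $\omega_0=0$, $\omega_{2i}=\omega_i$ and $\omega_{2i+1}=1-\omega_i$ for $i\ge0$. For a nonempty set $S\subseteq\{0,1,2,\dots\}$, the $S$-gap shift $X(S)\subseteq\{0,1\}^{\mathbb{Z}}$ is the set of bi-infinite binary sequences in which the number of consecutive zeros between ones is always an element of $S$. The entropy of a shift $X$ is $h(X)=\lim_n\frac1n\log|\mathcal{B}_n(X)|$, where $\mathcal{B}_n(X)$ is the set of words of length $n$ occurring in points of $X$ and $\log$ is to base $2$. *)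

From Stdlib Require Import Reals ZArith Classical ClassicalEpsilon.
From mathcomp Require Import ssreflect ssrfun ssrbool eqtype ssrnat seq fintype tuple finset.

Set Implicit Arguments.
Unset Strict Implicit.
Unset Printing Implicit Defensive.

(* omega_0 = 0, omega_(2i) = omega_i, omega_(2i+1) = 1 - omega_i,
   computed with fuel (fuel j is enough since j./2 < j for j > 0). *)
Fixpoint tm_aux (fuel j : nat) : bool :=
  match fuel with
  | 0 => false
  | S f => if j == 0 then false
           else if odd j then ~~ tm_aux f j./2 else tm_aux f j./2
  end.

Definition thue_morse (j : nat) : nat := nat_of_bool (tm_aux j j).

(* A point is a bi-infinite binary sequence Z -> bool (true = symbol 1).
   S is a set of naturals, given as a predicate nat -> Prop. *)
Definition gap_shift (S : nat -> Prop) (x : Z -> bool) : Prop :=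
  forall i j : Z, (i < j)%Z -> x i = true -> x j = true ->
    (forall k : Z, (i < k < j)%Z -> x k = false) ->
    S (Z.to_nat (j - i - 1)).

Definition is_gap_shift (X : (Z -> bool) -> Prop) : Prop :=
  exists S : nat -> Prop, (exists s, S s) /\
    forall x, X x <-> gap_shift S x.

Definition pbool (P : Prop) : bool :=
  if excluded_middle_informative P then true else false.

Definition occurs (X : (Z -> bool) -> Prop) (n : nat) (w : n.-tuple bool) : Prop :=
  exists x, X x /\ exists i : Z, forall k : 'I_n, x (i + Z.of_nat k)%Z = tnth w k.

Definition nwords (X : (Z -> bool) -> Prop) (n : nat) : nat :=
  #|[set w : n.-tuple bool | pbool (occurs X w)]|.

Definition log2 (x : R) : R := (ln x / ln 2)%R.

Definition has_entropy (X : (Z -> bool) -> Prop) (h : R) : Prop :=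
  Un_cv (fun n => (log2 (INR (nwords X n.+1)) / INR n.+1)%R) h.

Definition unique_gap_shift_with_entropy (q : R) : Prop :=
  exists X, is_gap_shift X /\ has_entropy X q /\
    forall Y, is_gap_shift Y -> has_entropy Y q -> forall x, Y x <-> X x.

Definition TM_equation (lam : R) : Prop :=
  infinite_sum (fun j => (INR (thue_morse j.+1) / lam ^ j.+1)%R) 1%R.

From Stdlib Require Import Reals ZArith Lia Lra.
From Stdlib Require Import Classical ClassicalEpsilon FunctionalExtensionality PropExtensionality.
From mathcomp Require Import ssreflect ssrfun ssrbool eqtype ssrnat seq fintype tuple finset.
From mathcomp Require Import zify.
From Coquelicot Require Import Coquelicot.

(** Gaps of length [s] are the words [0^s 1], so counting the admissible words of [X(S)]
    with an automaton that remembers the current run of zeros gives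
    [c λ^n <= |B_n(X(S))| <= 4 (n+1)^2 λ^n] whenever [Σ_(s ∈ S) λ^-(s+1) = 1]; hence
    [h(X(S)) = log λ] exactly when the indicator of [S] is an expansion of [1] in base [λ].
    Since [X(S)] determines [S], a gap shift is the only one of its entropy iff that expansion
    is the unique expansion of [1] in base [λ], and the theorem becomes the Komornik--Loreti
    theorem: [λ_KL] is the smallest base with a unique expansion of [1].
    In base [λ_KL] the expansion [ω_1 ω_2 ...] is unique because every shift of it and of its
    complement is lexicographically smaller, a property of the Thue--Morse sequence. In a base
    [λ < λ_KL] a unique expansion satisfies the same lexicographic conditions, and an induction
    on blocks of length [2^k] shows that no such sequence lies below [ω_1 ω_2 ...]; comparing
    values in base [λ_KL] then gives a contradiction. *)

Local Open Scope nat_scope.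

Definition bstream := nat -> bool.

Definition shift (n : nat) (c : bstream) : bstream := fun j => c (n + j).
Definition compl (c : bstream) : bstream := fun j => ~~ c j.
Definition scons (b : bool) (c : bstream) : bstream := fun j => if j is j'.+1 then c j' else b.

Definition lexlt (c d : bstream) : Prop :=
  exists m, (forall j, j < m -> c j = d j) /\ c m = false /\ d m = true.
Definition lexle (c d : bstream) : Prop := c = d \/ lexlt c d.

Lemma shift0 c : shift 0 c = c.
Proof. exact: functional_extensionality. Qed.

Lemma shift_shift m n c : shift m (shift n c) = shift (n + m) c.
Proof. by apply: functional_extensionality => j; rewrite /shift addnA. Qed.

Lemma shift_compl n c : shift n (compl c) = compl (shift n c).
Proof. by []. Qed.

Lemma complK : involutive compl.
Proof. by move=> c; apply: functional_extensionality => j; rewrite /compl negbK. Qed.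

Lemma compl_scons b c : compl (scons b c) = scons (~~ b) (compl c).
Proof. by apply: functional_extensionality; case. Qed.

Lemma lexlt_irr c : ~ lexlt c c.
Proof. by case=> m [_ [->]]. Qed.

Lemma lexlt_first_diff c d i :
  lexlt c d -> (forall j, j < i -> c j = d j) -> c i = true -> d i = false -> False.
Proof.
case=> m [eq_m [cm dm]] eq_i ci di.
case: (ltngtP m i) => [lt_mi|lt_im|eq_mi].
- by move: (eq_i m lt_mi); rewrite cm dm.
- by move: (eq_m i lt_im); rewrite ci di.
- by move: cm; rewrite eq_mi ci.
Qed.

Lemma lex_trichotomy c d : c = d \/ lexlt c d \/ lexlt d c.
Proof.
case: (classic (c = d)) => [->|neq_cd]; first by left.
have [p diff_p] : exists p, c p != d p.
  apply: NNPP => no_diff; apply: neq_cd; apply: functional_extensionality => j.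
  by apply/eqP; apply: NNPP => ne; apply: no_diff; exists j; apply/negP.
case: (ex_minnP (ex_intro (fun j => c j != d j) p diff_p)) => q diff_q min_q.
have eq_before j : j < q -> c j = d j.
  by move=> lt_jq; apply/eqP; apply: contraTT lt_jq => /min_q; rewrite -leqNgt.
right; move: diff_q; case cq: (c q); case dq: (d q) => // _.
- by right; exists q; split=> // j /eq_before.
- by left; exists q.
Qed.

Lemma lexle_scons b c d : lexle c d -> lexle (scons b c) (scons b d).
Proof.
case=> [->|[m [eq_m [cm dm]]]]; first by left.
by right; exists m.+1; split=> //; case=> [|j] //= /eq_m.
Qed.

Lemma lexlt_scons c d : lexlt (scons false c) (scons true d).
Proof. by exists 0. Qed.

Lemma lexle_compl c d : lexle c d -> lexle (compl d) (compl c).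
Proof.
case=> [->|[m [eq_m [cm dm]]]]; first by left.
by right; exists m; split; [move=> j /eq_m; rewrite /compl => -> | rewrite /compl cm dm].
Qed.

(** * The Thue--Morse sequence *)

Lemma tm_aux_fuel f1 f2 j : j <= f1 -> j <= f2 -> tm_aux f1 j = tm_aux f2 j.
Proof.
elim: f1 f2 j => [|f1 IH] [|f2] j le1 le2 /=; try (have -> : j = 0 by lia); try done.
by case: (j =P 0) => // _; rewrite (IH f2 j./2) //; lia.
Qed.

Definition tm (j : nat) : bool := tm_aux j j.

Lemma tmE j : 0 < j -> tm j = (if odd j then ~~ tm j./2 else tm j./2).
Proof.
case: j => [|j] // _; rewrite /tm /=.
by rewrite (@tm_aux_fuel j (j.+1)./2) //; lia.
Qed.

Lemma tm_double i : tm i.*2 = tm i.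
Proof. by case: i => [|i] //; rewrite tmE ?odd_double ?doubleK //; lia. Qed.

Lemma tm_doubleS i : tm i.*2.+1 = ~~ tm i.
Proof. by rewrite tmE //= odd_double /=; congr (~~ tm _); lia. Qed.

Lemma tm_pow2D k r : r < 2 ^ k -> tm (2 ^ k + r) = ~~ tm r.
Proof.
elim: k r => [|k IH] r lt_r; first by have -> : r = 0 by move: lt_r; rewrite expn0; lia.
rewrite expnS in lt_r *; rewrite -(odd_double_half r).
case: (odd r) => /=.
- have -> : 2 * 2 ^ k + (r./2.*2).+1 = (2 ^ k + r./2).*2.+1 by lia.
  by rewrite !tm_doubleS IH //; lia.
- have -> : 2 * 2 ^ k + r./2.*2 = (2 ^ k + r./2).*2 by lia.
  by rewrite add0n !tm_double IH //; lia.
Qed.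

Lemma tm_not_periodic n : 0 < n -> ~ (forall j, 0 < j -> tm (j + n) = tm j).
Proof.
elim/ltn_ind: n => n IH n_gt0 per.
rewrite -(odd_double_half n) in per n_gt0 IH.
case: (odd n) per n_gt0 IH => /= per n_gt0 IH.
- have antiper j : tm (j + (n./2).+1) = ~~ tm j.
    rewrite -tm_doubleS -tm_double.
    have -> : (j + n./2.+1).*2 = j.*2.+1 + (n./2.*2).+1 by lia.
    by apply: per.
  have step j : 0 < j -> tm j.+1 = tm j.
    move=> j_gt0; have := antiper (j + n./2.+1); rewrite [in RHS]antiper negbK.
    have -> : j + n./2.+1 + n./2.+1 = j.+1 + (n./2.*2).+1 by lia.
    by rewrite per.
  by have := step 2 isT; have := step 1 isT.
- apply: (IH n./2); [lia | lia | move=> j j_gt0].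
  rewrite -tm_double -[tm j]tm_double; have -> : (j + n./2).*2 = j.*2 + n./2.*2 by lia.
  by apply: per; lia.
Qed.

Lemma tm_not_antiperiodic n : 0 < n -> ~ (forall j, 0 < j -> tm (j + n) = ~~ tm j).
Proof.
move=> n_gt0 anti; apply: (@tm_not_periodic (n + n)); first lia.
by move=> j j_gt0; rewrite addnA anti; [rewrite anti // negbK | lia].
Qed.

(** * The Komornik--Loreti sequence [kl = ω_1 ω_2 ω_3 ...] *)

Definition tm_morph (c : bstream) : bstream := fun j => if odd j then ~~ c j./2 else c j./2.

Lemma tm_morph_tm : tm_morph tm = tm.
Proof. by apply: functional_extensionality; case=> [|j] //; rewrite /tm_morph (@tmE j.+1). Qed.

Lemma shift_double_tm_morph n c : shift n.*2 (tm_morph c) = tm_morph (shift n c).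
Proof.
apply: functional_extensionality => j; rewrite /shift /tm_morph oddD odd_double /=.
by have -> : (n.*2 + j)./2 = n + j./2 by lia.
Qed.

Lemma shift1_tm_morph c : shift 1 (tm_morph c) = scons (~~ c 0) (tm_morph (shift 1 c)).
Proof.
apply: functional_extensionality; rewrite /shift /tm_morph /scons.
by case=> [|j] //=; rewrite negbK add1n.
Qed.

Lemma compl_tm_morph c : compl (tm_morph c) = tm_morph (compl c).
Proof. by apply: functional_extensionality => j; rewrite /compl /tm_morph; case: (odd j). Qed.

Lemma lexle_tm_morph c d : lexle c d -> lexle (tm_morph c) (tm_morph d).
Proof.
case=> [->|[m [eq_m [cm dm]]]]; first by left.
right; exists m.*2; split; last by rewrite /tm_morph odd_double doubleK cm dm.
by move=> j lt_j; rewrite /tm_morph eq_m //; lia.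
Qed.

Definition kl : bstream := shift 1 tm.

Lemma kl_scons : kl = scons true (tm_morph kl).
Proof. by rewrite /kl -{1}tm_morph_tm shift1_tm_morph. Qed.

Lemma shift_kl n : shift n kl = shift n.+1 tm.
Proof. by rewrite /kl shift_shift add1n. Qed.

Lemma kl_pow2 k : kl (2 ^ k).-1 = true.
Proof. by rewrite /kl /shift add1n prednK ?expn_gt0 // -[2 ^ k]addn0 tm_pow2D ?expn_gt0. Qed.

Lemma kl_pow2D k i : i < (2 ^ k).-1 -> kl (2 ^ k + i) = ~~ kl i.
Proof.
move=> lt_i; rewrite /kl /shift.
have -> : 1 + (2 ^ k + i) = 2 ^ k + i.+1 by lia.
by rewrite tm_pow2D //; lia.
Qed.

Lemma tm_morph_lt_kl c : lexlt (tm_morph c) kl.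
Proof.
rewrite /tm_morph; case c0: (c 0).
- by exists 1; split; [case=> // _; rewrite /= c0 | rewrite /= c0].
- by exists 0; rewrite /= c0.
Qed.

Lemma compl_kl_lt_tm_morph c : lexlt (compl kl) (tm_morph c).
Proof.
rewrite /tm_morph; case c0: (c 0).
- by exists 0; rewrite /= c0.
- by exists 1; split; [case=> // _; rewrite /= c0 | rewrite /= c0].
Qed.

Lemma tm_shift_between n : lexle (compl kl) (shift n tm) /\ lexle (shift n tm) kl.
Proof.
elim/ltn_ind: n => n IH.
case: n IH => [|n] IH.
  by rewrite shift0; split; right; [exists 1; split=> //; case | exists 0].
move: (odd_double_half n.+1) (IH (n.+1)./2 ltac:(lia)).
case: (odd n.+1); case: (n.+1)./2 => [|k] /= def_n IHk; rewrite -def_n //.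
- by split; [right; exists 0 | left].
- rewrite addnC -shift_shift -tm_morph_tm shift_double_tm_morph shift1_tm_morph shift_shift addn1.
  have [IH1 IH2] := IH k.+2 ltac:(lia).
  rewrite kl_scons compl_scons compl_tm_morph.
  case: (shift k.+1 tm 0) => /=.
  + split; [apply/lexle_scons/lexle_tm_morph => // | right; exact: lexlt_scons].
  + split; [right; exact: lexlt_scons | apply/lexle_scons/lexle_tm_morph => //].
- rewrite add0n -tm_morph_tm shift_double_tm_morph.
  by split; right; [apply: compl_kl_lt_tm_morph | apply: tm_morph_lt_kl].
Qed.

Lemma kl_shift_le n : lexle (shift n kl) kl.
Proof. by rewrite shift_kl; case: (tm_shift_between n.+1). Qed.

Lemma compl_kl_shift_le n : lexle (compl (shift n kl)) kl.
Proof.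
rewrite shift_kl; case: (tm_shift_between n.+1) => /lexle_compl.
by rewrite complK.
Qed.

Lemma kl_shift_neq n : 0 < n -> shift n kl <> kl.
Proof.
move=> n_gt0 eq_kl; apply: (@tm_not_periodic n n_gt0) => j j_gt0.
have := f_equal (fun c => c j.-1) eq_kl; rewrite /kl /shift.
have -> : 1 + (n + j.-1) = j + n by lia.
by have -> : 1 + j.-1 = j by lia.
Qed.

Lemma compl_kl_shift_neq n : compl (shift n kl) <> kl.
Proof.
case: n => [|n] eq_kl; first by have := f_equal (fun c => c 0) eq_kl.
apply: (@tm_not_antiperiodic n.+1) => // j j_gt0.
have := f_equal (fun c => c j.-1) eq_kl; rewrite /compl /kl /shift.
have -> : 1 + (n.+1 + j.-1) = j + n.+1 by lia.
have -> : 1 + j.-1 = j by lia.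
by move=> <-; rewrite negbK.
Qed.

(** The conditions on [a] are those satisfied by a unique expansion (see [bval_lt1_lexlt]);
    they force [a] to agree with [kl] on every block [[0, 2^k)]. *)
Section KLMinimal.

Variable a : bstream.
Hypothesis a_after0 : forall n, a n = false -> lexlt (shift n.+1 a) a.
Hypothesis a_after1 : forall n, a n = true -> lexlt (compl (shift n.+1 a)) a.
Hypothesis a_lt_kl : lexlt a kl.

Lemma minimal_head : a 0 = true.
Proof.
case a0: (a 0) => //.
have [p ap] : exists p, a p.
  by case: (a_after0 _ a0) => w [_ [_ aw]]; exists w.
case: (ex_minnP (ex_intro (fun j => a j) p ap)) => [[|q]] aq min_q; first by rewrite a0 in aq.
have before_q j : j < q.+1 -> a j = false.
  by move=> lt_j; apply: negbTE; apply: contraTN lt_j => /min_q; rewrite -leqNgt.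
exfalso; apply: (@lexlt_first_diff _ _ 0 (a_after0 _ (before_q q (ltnSn q)))) => //.
by rewrite /shift addn0.
Qed.

Section Doubling.

Variable k : nat.
Local Notation m := (2 ^ k).
Hypothesis a_kl : forall j, j < m -> a j = kl j.

Let m_gt0 : 0 < m. Proof. by rewrite expn_gt0. Qed.

Let a_m1 : a m.-1 = true.
Proof. by rewrite a_kl ?kl_pow2 //; lia. Qed.

Let compl_tail_lt : lexlt (compl (shift m a)) a.
Proof. by have := a_after1 _ a_m1; rewrite prednK. Qed.

Lemma doubling_compl i : i < m.-1 -> a (m + i) = ~~ a i.
Proof.
elim/ltn_ind: i => i IH lt_i.
have [//|same] : a (m + i) = ~~ a i \/ a (m + i) = a i by case: (a (m + i)); case: (a i); auto.
case ai: (a i); exfalso.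
- apply: (@lexlt_first_diff _ _ (m + i) a_lt_kl).
  + move=> j lt_j; case: (ltnP j m) => [|le_mj]; first exact: a_kl.
    have -> : j = m + (j - m) by lia.
    by rewrite IH ?kl_pow2D ?a_kl //; lia.
  + by rewrite same.
  + by rewrite kl_pow2D // -a_kl ?ai //; lia.
- apply: (@lexlt_first_diff _ _ i compl_tail_lt).
  + by move=> j lt_j; rewrite /compl /shift IH ?negbK //; lia.
  + by rewrite /compl /shift same ai.
  + done.
Qed.

Lemma doubling_antiperiodic : a (m + m.-1) = false -> forall j, a (m + j) = ~~ a j.
Proof.
move=> a_end; have tail_lt := a_after0 _ a_end.
rewrite (_ : (m + m.-1).+1 = m + m) in tail_lt; last lia.
elim/ltn_ind=> i IH.
case: (ltnP i m.-1) => [|le_i]; first exact: doubling_compl.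
case: (ltnP i m) => [lt_i|le_mi].
  have -> : i = m.-1 by lia.
  by rewrite a_end a_m1.
have [//|same] : a (m + i) = ~~ a i \/ a (m + i) = a i by case: (a (m + i)); case: (a i); auto.
have ai : a i = ~~ a (i - m).
  have := IH (i - m); rewrite (_ : m + (i - m) = i); last lia.
  by apply; lia.
case aim: (a (i - m)); exfalso.
- apply: (@lexlt_first_diff _ _ i compl_tail_lt).
  + by move=> j lt_j; rewrite /compl /shift IH ?negbK.
  + by rewrite /compl /shift same ai aim.
  + by rewrite ai aim.
- apply: (@lexlt_first_diff _ _ (i - m) tail_lt).
  + move=> j lt_j; rewrite /shift.
    have -> : m + m + j = m + (m + j) by lia.
    by rewrite IH; [rewrite IH ?negbK //; lia | lia].
  + rewrite /shift (_ : m + m + (i - m) = m + i); last lia.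
    by rewrite same ai aim.
  + done.
Qed.

Lemma doubling_kl j : j < 2 ^ k.+1 -> a j = kl j.
Proof.
case a_end: (a (m + m.-1)); last first.
  have per := doubling_antiperiodic a_end.
  have per2 : shift (m + m) a = a.
    apply: functional_extensionality => i; rewrite /shift.
    have -> : m + m + i = m + (m + i) by lia.
    by rewrite !per negbK.
  by have := a_after0 _ a_end; rewrite (_ : (m + m.-1).+1 = m + m) ?per2 //; [move/lexlt_irr | lia].
rewrite expnS => lt_j.
case: (ltnP j m) => [|le_mj]; first exact: a_kl.
case: (ltnP j (m + m.-1)) => [lt_j'|le_j].
  have -> : j = m + (j - m) by lia.
  by rewrite doubling_compl ?kl_pow2D ?a_kl //; lia.
have -> : j = m + m.-1 by lia.
rewrite a_end /kl /shift; have -> : 1 + (m + m.-1) = m.*2 by lia.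
by rewrite tm_double -[m]addn0 tm_pow2D.
Qed.

End Doubling.

Lemma minimal_eq_kl : a = kl.
Proof.
apply: functional_extensionality => j.
suff agree k : forall j, j < 2 ^ k -> a j = kl j by apply: (agree j); exact: ltn_expl.
elim: k => [|k IH] i; last exact: doubling_kl.
rewrite expn0 => lt_i; have -> : i = 0 by lia.
by rewrite minimal_head.
Qed.

End KLMinimal.

Lemma kl_lex_minimal a :
  (forall n, a n = false -> lexlt (shift n.+1 a) a) ->
  (forall n, a n = true -> lexlt (compl (shift n.+1 a)) a) ->
  ~ lexlt a kl.
Proof.
move=> after0 after1 lt_kl.
by have := lt_kl; rewrite (@minimal_eq_kl a after0 after1 lt_kl) => /lexlt_irr.
Qed.

(** * Expansions [Σ c_j l^-(j+1)] in a base [1 < l] *)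

Local Open Scope R_scope.

Definition digit_term (l : R) (c : bstream) (j : nat) : R := if c j then / l ^ j.+1 else 0.

Definition bval (l : R) (c : bstream) : R := Series (digit_term l c).

Fixpoint bval_prefix (l : R) (c : bstream) (m : nat) : R :=
  if m is m'.+1 then bval_prefix l c m' + digit_term l c m' else 0.

Lemma pow_unbounded l M : 1 < l -> exists n, M < l ^ n.
Proof.
move=> gt1; have [N big] := Pow_x_infinity l ltac:(rewrite Rabs_pos_eq; lra) (M + 1).
exists N; have := big N (Nat.le_refl N).
by rewrite Rabs_pos_eq; [lra | apply: pow_le; lra].
Qed.

Section Expansions.

Context {l : R}.
Hypothesis l_gt1 : 1 < l.

Let inv_pow_gt0 n : 0 < / l ^ n.
Proof. by apply: Rinv_0_lt_compat; apply: pow_lt; lra. Qed.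

Let inv_l_lt1 : Rabs (/ l) < 1.
Proof.
rewrite Rabs_pos_eq; last by apply: Rlt_le; apply: Rinv_0_lt_compat; lra.
by rewrite -Rinv_1; apply: Rinv_lt_contravar; lra.
Qed.

Lemma inv_powS j : / l ^ j.+1 = / l * (/ l) ^ j.
Proof. by rewrite -pow_inv. Qed.

Lemma ex_series_inv_pow : ex_series (fun j => / l ^ j.+1).
Proof.
apply: (ex_series_ext (fun j => scal (/ l) ((/ l) ^ j))).
  by move=> j; rewrite inv_powS.
apply: ex_series_scal_l; exists (/ (1 - / l)); exact: is_series_geom inv_l_lt1.
Qed.

Lemma Series_inv_pow : Series (fun j => / l ^ j.+1) = / (l - 1).
Proof.
rewrite (Series_ext _ (fun j => / l * (/ l) ^ j)); last exact: inv_powS.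
rewrite Series_scal_l (Series_geom _ inv_l_lt1) -Rinv_mult; congr Rinv; field; lra.
Qed.

Lemma digit_term_bounds c j : 0 <= digit_term l c j <= / l ^ j.+1.
Proof. by rewrite /digit_term; have := inv_pow_gt0 j.+1; case: (c j); lra. Qed.

Lemma ex_series_digit_term c : ex_series (digit_term l c).
Proof.
apply: (ex_series_le _ _ _ ex_series_inv_pow) => j.
by rewrite /norm /= /abs /= Rabs_pos_eq; case: (digit_term_bounds c j).
Qed.

Lemma bval_bounds c : 0 <= bval l c <= / (l - 1).
Proof.
split.
- have -> : 0 = Series (fun n => 0 * digit_term l c n) by rewrite Series_scal_l; ring.
  by apply: Series_le; [move=> n; have := digit_term_bounds c n; lra | exact: ex_series_digit_term].
- by rewrite -Series_inv_pow; apply: Series_le; [exact: digit_term_bounds | exact: ex_series_inv_pow].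
Qed.

Lemma bval_cons c : bval l c = (if c 0%N then / l else 0) + / l * bval l (shift 1 c).
Proof.
rewrite /bval Series_incr_1; last exact: ex_series_digit_term.
rewrite -Series_scal_l /digit_term pow_1; congr Rplus.
apply: Series_ext => k; rewrite /shift add1n.
by case: (c k.+1); rewrite //= ?Rinv_mult; lra.
Qed.

Lemma bval_decomp c m : bval l c = bval_prefix l c m + / l ^ m * bval l (shift m c).
Proof.
elim: m => [|m IH]; first by rewrite shift0 /= Rinv_1; lra.
rewrite IH (bval_cons (shift m c)) shift_shift /shift addn0 /= /digit_term addn1.
by rewrite Rinv_mult; case: (c m); rewrite -/(shift m.+1 c); ring.
Qed.

Lemma bval_split c m :
  bval l c = bval_prefix l c m + / l ^ m.+1 * ((if c m then 1 else 0) + bval l (shift m.+1 c)).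
Proof.
rewrite (bval_decomp c m) (bval_cons (shift m c)) shift_shift /shift addn0 addn1.
by rewrite [l ^ m.+1]/= Rinv_mult; case: (c m); ring.
Qed.

Lemma bval_prefix_ext c d m :
  (forall j, (j < m)%N -> c j = d j) -> bval_prefix l c m = bval_prefix l d m.
Proof.
elim: m => [|m IH] eq_cd //=.
by rewrite IH => [|j lt_j]; [rewrite /digit_term eq_cd | apply: eq_cd; lia].
Qed.

Lemma bval_compl c : bval l c + bval l (compl c) = / (l - 1).
Proof.
rewrite /bval -Series_plus; try exact: ex_series_digit_term.
rewrite -Series_inv_pow; apply: Series_ext => j.
by rewrite /digit_term /compl; case: (c j) => /=; lra.
Qed.

Lemma bval_prefix_le c m : bval_prefix l c m <= bval l c.
Proof.
rewrite (bval_decomp c m); have := bval_bounds (shift m c); have := inv_pow_gt0 m.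
by nra.
Qed.

Lemma bval_gt0 c j : c j = true -> 0 < bval l c.
Proof.
move=> cj; apply: (Rlt_le_trans _ (bval_prefix l c j.+1)); last exact: bval_prefix_le.
rewrite /= /digit_term cj; have := inv_pow_gt0 j.+1.
suff : 0 <= bval_prefix l c j by lra.
elim: j {cj} => [|j IH] /=; first lra.
by have := digit_term_bounds c j; lra.
Qed.

Lemma bval_first_diff c d m :
  (forall j, (j < m)%N -> c j = d j) -> c m = true -> d m = false ->
  bval l c - bval l d = / l ^ m.+1 * (1 + bval l (shift m.+1 c) - bval l (shift m.+1 d)).
Proof.
move=> eq_cd cm dm.
by rewrite (bval_split c m) (bval_split d m) (bval_prefix_ext _ _ _ eq_cd) cm dm; ring.
Qed.

Definition lexbounded (a c : bstream) : Prop := forall k, lexle (shift k c) a.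

Lemma lexbounded_shift a c m : lexbounded a c -> lexbounded a (shift m c).
Proof. by move=> bnd k; rewrite shift_shift. Qed.

Section LexBounded.

Variable a : bstream.
Hypothesis bval_a : bval l a = 1.

Lemma lexbounded_excess_grows c : lexbounded a c -> 1 < bval l c ->
  exists c', lexbounded a c' /\ l * (bval l c - 1) <= bval l c' - 1.
Proof.
move=> bnd gt1; have := bnd 0%N; rewrite shift0; case=> [eq_ca|[m [eq_m [cm am]]]].
  by move: gt1; rewrite eq_ca bval_a; lra.
exists (shift m.+1 c); split; first exact: lexbounded_shift.
have := bval_first_diff a c m (fun j lt_j => esym (eq_m j lt_j)) am cm.
rewrite bval_a; have := bval_bounds (shift m.+1 a); have := pow_lt l m.+1 ltac:(lra).
have : l <= l ^ m.+1 by rewrite /=; have := pow_R1_Rle l m ltac:(lra); nra.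
move=> ge_l pow_gt0 [ge0 _] diff.
have : l ^ m.+1 * (1 - bval l c) = 1 + bval l (shift m.+1 a) - bval l (shift m.+1 c).
  by rewrite diff; field; lra.
nra.
Qed.

Lemma lexbounded_bval_le c : lexbounded a c -> bval l c <= 1.
Proof.
move=> bnd; apply: Rnot_lt_le => gt1.
have iter N : exists c', lexbounded a c' /\ l ^ N * (bval l c - 1) <= bval l c' - 1.
  elim: N => [|N [c' [bnd' ex']]]; first by exists c; split=> //=; lra.
  have := pow_lt l N ltac:(lra) => pow_gt0.
  have [|c'' [bnd'' ex'']] := lexbounded_excess_grows _ bnd'; first nra.
  by exists c''; split=> //=; nra.
have [N big] := @pow_unbounded l (/ (l - 1) / (bval l c - 1)) l_gt1.
have [c' [_ ex']] := iter N; have := bval_bounds c'.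
have : / (l - 1) < l ^ N * (bval l c - 1).
  have := Rmult_lt_compat_r (bval l c - 1) _ _ ltac:(lra) big.
  by rewrite /Rdiv Rmult_assoc Rinv_l; lra.
have : 0 < / (l - 1) by apply: Rinv_0_lt_compat; lra.
lra.
Qed.

Lemma lexbounded_bval_lt c : (forall m, 0 < bval l (shift m a)) ->
  lexbounded a c -> c <> a -> bval l c < 1.
Proof.
move=> tails_gt0 bnd neq_ca; have := bnd 0%N; rewrite shift0; case=> // -[m [eq_m [cm am]]].
have := bval_first_diff a c m (fun j lt_j => esym (eq_m j lt_j)) am cm.
rewrite bval_a; have := lexbounded_bval_le _ (lexbounded_shift _ _ m.+1 bnd).
have := tails_gt0 m.+1; have := inv_pow_gt0 m.+1; nra.
Qed.

End LexBounded.

End Expansions.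

Lemma digit_term_antimono l l' c j : 1 < l <= l' -> digit_term l' c j <= digit_term l c j.
Proof.
move=> le_ll'; rewrite /digit_term; case: (c j); last lra.
by apply: Rinv_le_contravar; [apply: pow_lt | apply: pow_incr]; lra.
Qed.

Lemma bval_prefix_antimono l l' c m : 1 < l <= l' -> bval_prefix l' c m <= bval_prefix l c m.
Proof.
move=> le_ll'; elim: m => [|m IH] /=; first lra.
by have := @digit_term_antimono l l' c m le_ll'; lra.
Qed.

Lemma bval_antimono l l' c : 1 < l <= l' -> bval l' c <= bval l c.
Proof.
move=> le_ll'; apply: Series_le; last by apply: ex_series_digit_term; lra.
move=> n; split; last exact: digit_term_antimono.
by case: (@digit_term_bounds l' ltac:(lra) c n).
Qed.

Lemma bval_strict_antimono {l l' c j} : 1 < l < l' -> c j = true -> bval l' c < bval l c.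
Proof.
move=> lt_ll' cj.
rewrite (@bval_split l ltac:(lra) c j) (@bval_split l' ltac:(lra) c j) cj.
have := @bval_prefix_antimono l l' c j ltac:(lra).
have := @bval_antimono l l' (shift j.+1 c) ltac:(lra).
have : / l' ^ j.+1 < / l ^ j.+1.
  apply: Rinv_lt_contravar; first by apply: Rmult_lt_0_compat; apply: pow_lt; lra.
  by rewrite /=; have := pow_incr l l' j ltac:(lra); have := pow_lt l j ltac:(lra); nra.
have := @bval_bounds l' ltac:(lra) (shift j.+1 c).
have : 0 < / l' ^ j.+1 by apply: Rinv_0_lt_compat; apply: pow_lt; lra.
nra.
Qed.

Lemma bval_lipschitz l l' c : 1 < l <= l' -> bval l c - bval l' c <= / (l - 1) - / (l' - 1).
Proof.
move=> le_ll'.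
have := @bval_compl l ltac:(lra) c; have := @bval_compl l' ltac:(lra) c.
by have := @bval_antimono l l' (compl c) le_ll'; lra.
Qed.

Section Greedy.

Context {l : R}.
Hypothesis l_range : 1 < l <= 2.

Fixpoint greedy_rest (x : R) (n : nat) : R :=
  if n is n'.+1 then
    greedy_rest x n' - (if Rle_dec (/ l ^ n'.+1) (greedy_rest x n') then / l ^ n'.+1 else 0)
  else x.

Definition greedy_digits (x : R) : bstream :=
  fun n => if Rle_dec (/ l ^ n.+1) (greedy_rest x n) then true else false.

Lemma greedy_rest_bounds x : 0 <= x <= / (l - 1) ->
  forall n, 0 <= greedy_rest x n <= / l ^ n * / (l - 1).
Proof.
move=> x_range; elim=> [|n IH] /=; first by rewrite Rinv_1; lra.
have := pow_lt l n ltac:(lra) => pow_gt0.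
have := Rinv_0_lt_compat _ pow_gt0 => inv_gt0.
have : 1 <= / (l - 1) by rewrite -Rinv_1; apply: Rinv_le_contravar; lra.
rewrite Rinv_mult; case: Rle_dec => [le_rest|gt_rest] ge1 /=.
- have : / l ^ n * / (l - 1) - / l * / l ^ n = / l * / l ^ n * / (l - 1) by field; lra.
  lra.
- have : 0 < / l * / l ^ n by apply: Rmult_lt_0_compat => //; apply: Rinv_0_lt_compat; lra.
  nra.
Qed.

Lemma bval_prefix_greedy x n : bval_prefix l (greedy_digits x) n = x - greedy_rest x n.
Proof.
elim: n => [|n IH] /=; first lra.
by rewrite IH /digit_term /greedy_digits; case: Rle_dec => /=; lra.
Qed.

Lemma greedy_expansion x : 0 <= x <= / (l - 1) -> exists c, bval l c = x.
Proof.
move=> x_range; exists (greedy_digits x); apply: NNPP => neq.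
set err := Rabs (bval l (greedy_digits x) - x).
have err_gt0 : 0 < err by apply: Rabs_pos_lt; lra.
have [n big] := @pow_unbounded l (2 * / (l - 1) / err) ltac:(lra).
have decomp := @bval_decomp l ltac:(lra) (greedy_digits x) n.
rewrite bval_prefix_greedy in decomp.
have := greedy_rest_bounds _ x_range n.
have := @bval_bounds l ltac:(lra) (shift n (greedy_digits x)).
have := pow_lt l n ltac:(lra) => pow_gt0.
have := Rinv_0_lt_compat _ pow_gt0 => inv_gt0 tail rest.
have : err <= 2 * / l ^ n * / (l - 1) by rewrite /err decomp; apply: Rabs_le; split; nra.
have : 2 * / (l - 1) < l ^ n * err.
  have := Rmult_lt_compat_r _ _ _ err_gt0 big.
  by rewrite /Rdiv Rmult_assoc Rinv_l; lra.
have : l ^ n * (2 * / l ^ n * / (l - 1)) = 2 * / (l - 1) by field; lra.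
nra.
Qed.

End Greedy.

Lemma kl_ones_after m : exists j, (m <= j)%N /\ kl j = true.
Proof.
exists (2 ^ m).-1; split; last exact: kl_pow2.
by have := ltn_expl m (isT : (1 < 2)%N); lia.
Qed.

Lemma bval_shift_kl_gt0 {l} : 1 < l -> forall m, 0 < bval l (shift m kl).
Proof.
move=> l_gt1 m; have [j [le_mj klj]] := kl_ones_after m.
by apply: (bval_gt0 l_gt1 _ (j - m)); rewrite /shift subnKC.
Qed.

Lemma lexbounded_kl_shift n : lexbounded kl (shift n kl).
Proof. by move=> k; rewrite shift_shift; apply: kl_shift_le. Qed.

Lemma lexbounded_kl_compl_shift n : lexbounded kl (compl (shift n kl)).
Proof. by move=> k; rewrite shift_compl shift_shift; apply: compl_kl_shift_le. Qed.

Lemma kl_unique_expansion {L} c : 1 < L -> bval L kl = 1 -> bval L c = 1 -> c = kl.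
Proof.
move=> L_gt1 kl1 c1.
have tails_gt0 := bval_shift_kl_gt0 L_gt1.
have inv_gt0 m : 0 < / L ^ m.+1 by apply: Rinv_0_lt_compat; apply: pow_lt; lra.
case: (lex_trichotomy c kl) => [//|[[m [eq_m [cm klm]]]|[m [eq_m [klm cm]]]]].
- have := bval_first_diff L_gt1 _ _ m (fun j lt_j => esym (eq_m j lt_j)) klm cm.
  rewrite kl1 c1 Rminus_diag => /esym /Rmult_integral [|]; first by have := inv_gt0 m; lra.
  have := bval_bounds L_gt1 (shift m.+1 c); have := bval_compl L_gt1 (shift m.+1 kl).
  have := lexbounded_bval_lt L_gt1 _ kl1 _ tails_gt0 (lexbounded_kl_compl_shift m.+1)
    (@compl_kl_shift_neq _).
  lra.
- have := bval_first_diff L_gt1 _ _ m (fun j lt_j => esym (eq_m j lt_j)) cm klm.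
  rewrite kl1 c1 Rminus_diag => /esym /Rmult_integral [|]; first by have := inv_gt0 m; lra.
  have := bval_bounds L_gt1 (shift m.+1 c).
  have := lexbounded_bval_lt L_gt1 _ kl1 _ tails_gt0 (lexbounded_kl_shift m.+1)
    (@kl_shift_neq _ (ltn0Sn _)).
  lra.
Qed.

Definition splice (c : bstream) (n : nat) (b : bool) (g : bstream) : bstream :=
  fun j => if (j < n)%N then c j else if j == n then b else g (j - n.+1)%N.

Lemma splice_at c n b g : splice c n b g n = b.
Proof. by rewrite /splice ltnn eqxx. Qed.

Lemma bval_splice l c n b g : 1 < l ->
  bval l (splice c n b g) = bval_prefix l c n + / l ^ n.+1 * ((if b then 1 else 0) + bval l g).
Proof.
move=> l_gt1; rewrite (bval_split l_gt1 _ n) splice_at.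
rewrite (@bval_prefix_ext l _ c n); last by move=> j lt_j; rewrite /splice lt_j.
have -> // : shift n.+1 (splice c n b g) = g.
apply: functional_extensionality => j; rewrite /splice /shift.
have -> : (n.+1 + j < n)%N = false by lia.
have -> : (n.+1 + j == n)%N = false by lia.
by rewrite addKn.
Qed.

Section UniqueExpansion.

Variables (l : R) (c : bstream).
Hypothesis l_range : 1 < l <= 2.
Hypothesis c_one : bval l c = 1.
Hypothesis c_unique : forall d, bval l d = 1 -> d = c.

Let l_gt1 : 1 < l. Proof. lra. Qed.

Lemma unique_after0 n : c n = false -> bval l (shift n.+1 c) < 1.
Proof.
(* Otherwise setting digit [n] to [1] and expanding the rest greedily gives another expansion. *)
move=> cn; apply: Rnot_le_lt => ge1.
have := bval_bounds l_gt1 (shift n.+1 c) => tail.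
have [g g_val] := greedy_expansion l_range (bval l (shift n.+1 c) - 1) ltac:(lra).
have spliced_one : bval l (splice c n true g) = 1.
  by rewrite bval_splice // g_val; have := bval_split l_gt1 c n; rewrite cn c_one; lra.
by have := splice_at c n true g; rewrite (c_unique _ spliced_one) cn.
Qed.

Lemma unique_after1 n : c n = true -> bval l (compl (shift n.+1 c)) < 1.
Proof.
move=> cn; apply: Rnot_le_lt => ge1.
have := bval_bounds l_gt1 (shift n.+1 c); have := bval_compl l_gt1 (shift n.+1 c).
move=> compl_sum tail.
have [g g_val] := greedy_expansion l_range (1 + bval l (shift n.+1 c)) ltac:(lra).
have spliced_one : bval l (splice c n false g) = 1.
  by rewrite bval_splice // g_val; have := bval_split l_gt1 c n; rewrite cn c_one; lra.
by have := splice_at c n false g; rewrite (c_unique _ spliced_one) cn.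
Qed.

Lemma bval_lt1_lexlt d : bval l d < 1 -> lexlt d c.
Proof.
move=> d_lt1; case: (lex_trichotomy d c) => [eq_dc|[//|[m [eq_m [cm dm]]]]].
  by move: d_lt1; rewrite eq_dc c_one; lra.
have := bval_first_diff l_gt1 _ _ m (fun j lt_j => esym (eq_m j lt_j)) dm cm.
have := unique_after0 _ cm; have := bval_bounds l_gt1 (shift m.+1 d).
have : 0 < / l ^ m.+1 by apply: Rinv_0_lt_compat; apply: pow_lt; lra.
rewrite c_one; nra.
Qed.

Lemma unique_expansion_not_lt_kl : ~ lexlt c kl.
Proof.
apply: kl_lex_minimal => n cn; apply: bval_lt1_lexlt.
- exact: unique_after0.
- exact: unique_after1.
Qed.

End UniqueExpansion.

Lemma unique_expansion_base_ge l L c : 1 < l <= 2 -> bval L kl = 1 ->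
  bval l c = 1 -> (forall d, bval l d = 1 -> d = c) -> L <= l.
Proof.
move=> l_range kl_one c_one c_unique; apply: Rnot_lt_le => lt_lL.
have L_gt1 : 1 < L by lra.
case: (lex_trichotomy c kl) => [eq_c|[|[m [eq_m [klm cm]]]]].
- have [j [_ klj]] := kl_ones_after 0.
  have := bval_strict_antimono (conj (proj1 l_range) lt_lL) klj.
  by move: c_one; rewrite eq_c; lra.
- exact: unique_expansion_not_lt_kl l_range c_one c_unique.
- have := bval_first_diff L_gt1 _ _ m (fun j lt_j => esym (eq_m j lt_j)) cm klm.
  have := lexbounded_bval_le L_gt1 _ kl_one _ (lexbounded_kl_shift m.+1).
  have := bval_bounds L_gt1 (shift m.+1 c).
  have : 0 < / L ^ m.+1 by apply: Rinv_0_lt_compat; apply: pow_lt; lra.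
  rewrite kl_one => inv_gt0 tail tail_kl diff.
  have : 1 <= bval L c by nra.
  by have := bval_strict_antimono (conj (proj1 l_range) lt_lL) cm; lra.
Qed.

Lemma inv_pred_lipschitz a x y : 1 < a <= x -> x <= y ->
  / (x - 1) - / (y - 1) <= (y - x) / (a - 1) ^ 2.
Proof.
move=> [a_gt1 le_ax] le_xy.
have -> : / (x - 1) - / (y - 1) = (y - x) / ((x - 1) * (y - 1)) by field; lra.
apply: Rmult_le_compat_l; first lra.
by apply: Rinv_le_contravar; [apply: pow_lt | rewrite /=]; nra.
Qed.

Lemma bval_lipschitz_at a x y c : 1 < a <= x -> x <= y ->
  bval x c - bval y c <= (y - x) / (a - 1) ^ 2.
Proof.
move=> a_le_x le_xy; have := @inv_pred_lipschitz a x y a_le_x le_xy.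
by have := @bval_lipschitz x y c ltac:(lra); lra.
Qed.

Lemma bval_root_exists a b c : 1 < a <= b -> 1 <= bval a c -> bval b c <= 1 ->
  exists L, a <= L <= b /\ bval L c = 1.
Proof.
move=> [a_gt1 le_ab] ge1_a le1_b.
set E := fun x => a <= x <= b /\ 1 <= bval x c.
have sq_gt0 : 0 < (a - 1) ^ 2 by apply: pow_lt; lra.
have Ea : E a by split; [split; lra | exact: ge1_a].
have [L [L_ub L_least]] := completeness E (ex_intro _ b (fun x (Ex : E x) => proj2 (proj1 Ex)))
  (ex_intro _ a Ea).
have le_aL : a <= L by apply: L_ub.
have le_Lb : L <= b by apply: L_least => x [[_ le_xb] _].
exists L; split; first lra.
case: (Rtotal_order (bval L c) 1) => [lt1|[//|gt1]]; exfalso.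
- have lt_aL : a < L by case: (Req_dec L a) => [eq_La|]; [move: lt1; rewrite eq_La; lra | lra].
  set d := Rmin (L - a) ((1 - bval L c) * (a - 1) ^ 2 / 2).
  have d_gt0 : 0 < d by apply: Rmin_pos; [lra | nra].
  have d_le1 : d <= L - a := Rmin_l _ _.
  have d_le2 : d / (a - 1) ^ 2 <= (1 - bval L c) / 2.
    by apply/Rle_div_l => //; have : d <= (1 - bval L c) * (a - 1) ^ 2 / 2 := Rmin_r _ _; lra.
  have Ld_lt1 : bval (L - d) c < 1.
    have := @bval_lipschitz_at a (L - d) L c ltac:(lra) ltac:(lra).
    by rewrite (_ : L - (L - d) = d); [lra | ring].
  have : L <= L - d.
    apply: L_least => x [[le_ax le_xb] ge1_x]; apply: Rnot_lt_le => lt_x.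
    by have := @bval_antimono (L - d) x c ltac:(lra); lra.
  lra.
- have lt_Lb : L < b by case: (Req_dec L b) => [eq_Lb|]; [move: gt1; rewrite eq_Lb; lra | lra].
  set d := Rmin (b - L) ((bval L c - 1) * (a - 1) ^ 2 / 2).
  have d_gt0 : 0 < d by apply: Rmin_pos; [lra | nra].
  have d_le1 : d <= b - L := Rmin_l _ _.
  have d_le2 : d / (a - 1) ^ 2 <= (bval L c - 1) / 2.
    by apply/Rle_div_l => //; have : d <= (bval L c - 1) * (a - 1) ^ 2 / 2 := Rmin_r _ _; lra.
  have : E (L + d).
    split; first by lra.
    have := @bval_lipschitz_at a L (L + d) c ltac:(lra) ltac:(lra).
    by rewrite (_ : L + d - L = d); [lra | ring].
  by move/L_ub; lra.
Qed.

Lemma bval_near_below l c e : 1 < l -> 0 < e -> exists mu, 1 < mu < l /\ bval mu c < bval l c + e.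
Proof.
move=> l_gt1 e_gt0; set a := (1 + l) / 2.
have sq_gt0 : 0 < (a - 1) ^ 2 by apply: pow_lt; rewrite /a; lra.
set d := Rmin ((l - 1) / 2) (e * (a - 1) ^ 2 / 2).
have d_gt0 : 0 < d by apply: Rmin_pos; nra.
have d_le1 : d <= (l - 1) / 2 := Rmin_l _ _.
have d_le2 : d / (a - 1) ^ 2 <= e / 2.
  by apply/Rle_div_l => //; have : d <= e * (a - 1) ^ 2 / 2 := Rmin_r _ _; lra.
exists (l - d); split; first lra.
have := @bval_lipschitz_at a (l - d) l c ltac:(rewrite /a; lra) ltac:(lra).
by rewrite (_ : l - (l - d) = d); [lra | ring].
Qed.

Lemma bval_near_above l c e : 1 < l -> 0 < e -> exists mu, l < mu /\ bval l c - e < bval mu c.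
Proof.
move=> l_gt1 e_gt0; have sq_gt0 : 0 < (l - 1) ^ 2 by apply: pow_lt; lra.
exists (l + e * (l - 1) ^ 2 / 2); split; first nra.
have := @bval_lipschitz_at l l (l + e * (l - 1) ^ 2 / 2) c ltac:(lra) ltac:(nra).
have -> : (l + e * (l - 1) ^ 2 / 2 - l) / (l - 1) ^ 2 = e / 2 by field; lra.
lra.
Qed.

Lemma TM_equation_bval_kl {l} : 1 < l -> TM_equation l <-> bval l kl = 1.
Proof.
move=> l_gt1; rewrite /TM_equation -is_series_Reals.
have term_eq j : INR (thue_morse j.+1) / l ^ j.+1 = digit_term l kl j.
  by rewrite /thue_morse /digit_term /kl /shift add1n /tm; case: (tm_aux j.+1 j.+1) => /=; lra.
split=> [TM | one].
- by apply: is_series_unique; apply: (is_series_ext _ _ _ term_eq TM).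
- apply: (is_series_ext _ _ _ (fun j => esym (term_eq j))).
  by rewrite -one; apply: Series_correct; apply: ex_series_digit_term.
Qed.

Lemma bval_kl_3_2 : 1 < bval (3/2) kl.
Proof.
apply: (Rlt_le_trans _ (bval_prefix (3/2) kl 2)); last by apply: bval_prefix_le; lra.
by rewrite /= /digit_term /=; lra.
Qed.

Lemma bval_kl_2 : bval 2 kl < 1.
Proof.
rewrite (@bval_decomp 2 ltac:(lra) kl 4).
have := @bval_bounds 2 ltac:(lra) (shift 4 kl).
by rewrite /= /digit_term /=; lra.
Qed.

Lemma kl_root_exists : exists L, 1 < L < 2 /\ bval L kl = 1.
Proof.
have [L [L_range L_one]] := @bval_root_exists (3/2) 2 kl ltac:(lra)
  ltac:(have := bval_kl_3_2; lra) ltac:(have := bval_kl_2; lra).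
exists L; split=> //; split; first lra.
by case: (Req_dec L 2) => [eq_L2|]; [move: L_one; rewrite eq_L2; have := bval_kl_2; lra | lra].
Qed.

Lemma kl_root_unique l L : 1 < l -> 1 < L -> bval l kl = 1 -> bval L kl = 1 -> l = L.
Proof.
move=> l_gt1 L_gt1 l_one L_one; have kl0 : kl 0%N = true by [].
case: (Rtotal_order l L) => [lt_lL|[//|lt_Ll]].
- by have := bval_strict_antimono (conj l_gt1 lt_lL) kl0; lra.
- by have := bval_strict_antimono (conj L_gt1 lt_Ll) kl0; lra.
Qed.

(** * Words of gap shifts *)

Local Open Scope nat_scope.

Definition count_words (p : seq bool -> bool) (n : nat) : nat := #|[set w : n.-tuple bool | p w]|.

Lemma count_words_ext p q n : p =1 q -> count_words p n = count_words q n.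
Proof. by move=> eq_pq; apply: eq_card => w; rewrite !inE eq_pq. Qed.

Lemma count_words0 p : count_words p 0 = p [::].
Proof.
rewrite /count_words; have nil_w (w : 0.-tuple bool) : eqtype.val w = [::] by case: w => [[|]].
case p_nil: (p [::]).
- rewrite (_ : [set w : 0.-tuple bool | p w] = setT) ?cardsT ?card_tuple //.
  by apply/setP => w; rewrite !inE nil_w.
- rewrite (_ : [set w : 0.-tuple bool | p w] = set0) ?cards0 //.
  by apply/setP => w; rewrite !inE nil_w.
Qed.

Lemma count_wordsS p n :
  count_words p n.+1 = count_words (fun w => p (true :: w)) n + count_words (fun w => p (false :: w)) n.
Proof.
rewrite /count_words.
have cons_inj b : injective (fun w : n.-tuple bool => [tuple of b :: w]).
  by move=> w1 w2 /(f_equal eqtype.val) [] /val_inj.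
pose W b := (fun w : n.-tuple bool => [tuple of b :: w]) @: [set w : n.-tuple bool | p (b :: w)].
have -> : [set w : n.+1.-tuple bool | p w] = W true :|: W false.
  apply/setP => w; rewrite !inE; apply/idP/idP.
  - rewrite [w]tuple_eta => pw; apply/orP.
    by case: (thead w) pw => pw; [left | right]; apply/imsetP; exists (behead_tuple w); rewrite ?inE.
  - by case/orP => /imsetP [w' pw' ->]; move: pw'; rewrite inE.
rewrite cardsU (_ : W true :&: W false = set0) ?cards0 ?subn0 ?card_imset //.
apply/setP => w; rewrite !inE; apply/negP => /andP [/imsetP [w1 _ ->] /imsetP [w2 _]].
by move/(f_equal eqtype.val) => [].
Qed.

(** An automaton reading words left to right: [gap_ok_after P d w] holds when, after a [1]
    followed by [d] zeros, every gap completed inside [w] has its length in [P]. *)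
Fixpoint gap_ok_after (P : nat -> bool) (d : nat) (w : seq bool) : bool :=
  if w is b :: w' then (if b then P d && gap_ok_after P 0 w' else gap_ok_after P d.+1 w') else true.

Fixpoint gap_ok (P : nat -> bool) (w : seq bool) : bool :=
  if w is b :: w' then (if b then gap_ok_after P 0 w' else gap_ok P w') else true.

Lemma count_gap_ok_afterS P d n : count_words (gap_ok_after P d) n.+1 =
  count_words (gap_ok_after P d.+1) n + (if P d then count_words (gap_ok_after P 0) n else 0).
Proof.
rewrite count_wordsS addnC /=; congr (_ + _).
case: (P d); first exact: count_words_ext.
by apply/eqP; rewrite cards_eq0; apply/eqP/setP => w; rewrite !inE.
Qed.

Lemma count_gap_okS P n :
  count_words (gap_ok P) n.+1 = count_words (gap_ok_after P 0) n + count_words (gap_ok P) n.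
Proof. exact: count_wordsS. Qed.

Lemma pboolP (Q : Prop) : pbool Q = true <-> Q.
Proof. by rewrite /pbool; case: excluded_middle_informative. Qed.

Definition gapb (S : nat -> Prop) (s : nat) : bool := pbool (S s).

Section GapWords.

Variable S : nat -> Prop.

Definition gap_valid (w : seq bool) : Prop :=
  forall a b, a < b -> b < size w -> nth false w a -> nth false w b ->
    (forall k, a < k -> k < b -> nth false w k = false) -> S (b - a - 1).

(** [w] follows a [1] and [d] zeros, so its first [1], at position [b], closes a gap of
    length [d + b]. *)
Definition first_gap_valid (d : nat) (w : seq bool) : Prop :=
  forall b, b < size w -> nth false w b ->
    (forall k, k < b -> nth false w k = false) -> S (d + b).

Lemma gap_valid_cons_tail x w : gap_valid (x :: w) -> gap_valid w.
Proof.
move=> valid a b lt_ab lt_b wa wb zeros; have := valid a.+1 b.+1 lt_ab lt_b wa wb.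
rewrite (_ : b.+1 - a.+1 - 1 = b - a - 1); last lia.
by apply=> -[|k] lt_k lt_kb //=; apply: zeros; lia.
Qed.

Lemma gap_valid_false w : gap_valid (false :: w) <-> gap_valid w.
Proof.
split; first exact: gap_valid_cons_tail.
move=> valid [|a] [|b] lt_ab lt_b wa wb zeros //=.
have := valid a b lt_ab lt_b wa wb; rewrite (_ : b.+1 - a.+1 - 1 = b - a - 1); last lia.
by apply=> k lt_ak lt_kb; exact: (zeros k.+1).
Qed.

Lemma gap_valid_true w : gap_valid (true :: w) <-> gap_valid w /\ first_gap_valid 0 w.
Proof.
split=> [valid|[valid first] [|a] [|b] lt_ab lt_b wa wb zeros //=].
- split; first exact: gap_valid_cons_tail valid.
  move=> b lt_b wb zeros; have := valid 0 b.+1 (ltn0Sn _) lt_b isT wb.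
  rewrite (_ : b.+1 - 0 - 1 = 0 + b); last lia.
  by apply=> -[|k] lt_k lt_kb //=; apply: zeros; lia.
- rewrite (_ : b.+1 - 0 - 1 = 0 + b); last lia.
  by apply: first => // k lt_kb; exact: (zeros k.+1).
- have := valid a b lt_ab lt_b wa wb; rewrite (_ : b.+1 - a.+1 - 1 = b - a - 1); last lia.
  by apply=> k lt_ak lt_kb; exact: (zeros k.+1).
Qed.

Lemma first_gap_valid_false d w : first_gap_valid d (false :: w) <-> first_gap_valid d.+1 w.
Proof.
split=> [first b lt_b wb zeros|first [|b] lt_b wb zeros //=].
- have := first b.+1 lt_b wb; rewrite (_ : d + b.+1 = d.+1 + b); last lia.
  by apply=> -[|k] lt_kb //=; apply: zeros; lia.
- have := first b lt_b wb; rewrite (_ : d + b.+1 = d.+1 + b); last lia.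
  by apply=> k lt_kb; exact: (zeros k.+1).
Qed.

Lemma first_gap_valid_true d w : first_gap_valid d (true :: w) <-> S d.
Proof.
split=> [first|Sd [|b] lt_b wb zeros //=].
- by have := first 0 (ltn0Sn _) isT; rewrite addn0; apply.
- by rewrite addn0.
- by have := zeros 0 (ltn0Sn _).
Qed.

Lemma gap_ok_afterP d w : gap_ok_after (gapb S) d w <-> gap_valid w /\ first_gap_valid d w.
Proof.
elim: w d => [|[] w IH] d /=.
- by split=> // _; split=> [a b|b].
- rewrite gap_valid_true first_gap_valid_true; split.
  + by case/andP => /pboolP Sd /IH [].
  + by case=> [[valid first] Sd]; apply/andP; split; [apply/pboolP | apply/IH].
- by rewrite gap_valid_false first_gap_valid_false; exact: IH.
Qed.

Lemma gap_okP w : gap_ok (gapb S) w <-> gap_valid w.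
Proof.
elim: w => [|[] w IH] /=; first by split=> // _ a b.
- by rewrite gap_valid_true; exact: gap_ok_afterP.
- by rewrite gap_valid_false; exact: IH.
Qed.

Lemma occurs_gap_valid n (w : n.-tuple bool) : occurs (gap_shift S) w -> gap_valid w.
Proof.
case=> x [Xx [i x_w]] a b lt_ab lt_b wa wb zeros; rewrite size_tuple in lt_b.
have x_at k (lt_k : k < n) : x (i + Z.of_nat k)%Z = nth false w k.
  by have := x_w (Ordinal lt_k); rewrite (tnth_nth false).
have := Xx (i + Z.of_nat a)%Z (i + Z.of_nat b)%Z ltac:(lia).
rewrite !x_at ?wa ?wb; try lia.
rewrite (_ : Z.to_nat (i + Z.of_nat b - (i + Z.of_nat a) - 1) = b - a - 1); last lia.
apply=> // k lt_k.
rewrite (_ : k = i + Z.of_nat (Z.to_nat (k - i)))%Z ?x_at; try lia.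
by apply: zeros; lia.
Qed.

Lemma gap_valid_occurs n (w : n.-tuple bool) : gap_valid w -> occurs (gap_shift S) w.
Proof.
move=> valid.
pose x z := if ((0 <=? z) && (z <? Z.of_nat n))%Z then nth false w (Z.to_nat z) else false.
have x_in (k : nat) : k < n -> x (Z.of_nat k) = nth false w k.
  move=> lt_k; rewrite /x Nat2Z.id.
  by have -> : ((0 <=? Z.of_nat k) && (Z.of_nat k <? Z.of_nat n))%Z by apply/andP; split; lia.
exists x; split; last by exists 0%Z => k; rewrite (tnth_nth false) x_in.
move=> i j lt_ij; rewrite /x.
case: ifP => [/andP [/Z.leb_le ge0_i /Z.ltb_lt lt_i]|//] wi.
case: ifP => [/andP [/Z.leb_le ge0_j /Z.ltb_lt lt_j]|//] wj zeros.
have := valid (Z.to_nat i) (Z.to_nat j) ltac:(lia) ltac:(rewrite size_tuple; lia) wi wj.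
rewrite (_ : Z.to_nat j - Z.to_nat i - 1 = Z.to_nat (j - i - 1)); last lia.
apply=> k lt_ik lt_kj; rewrite -x_in; last lia.
by apply: zeros; lia.
Qed.

Lemma nwords_gap_shift n : nwords (gap_shift S) n = count_words (gap_ok (gapb S)) n.
Proof.
apply: eq_card => w; rewrite !inE; apply/idP/idP.
- by move/pboolP/occurs_gap_valid/gap_okP.
- by move/gap_okP/gap_valid_occurs/pboolP.
Qed.

End GapWords.

Local Open Scope R_scope.

Section WordCountBounds.

Variable P : nat -> bool.

Fixpoint gap_weight (x : R) (d n : nat) : R :=
  if n is n'.+1 then (if P d then 1 else 0) + / x * gap_weight x d.+1 n' else 0.

Lemma gap_weight_ge0 x d n : 0 < x -> 0 <= gap_weight x d n.
Proof.
move=> x_gt0; elim: n d => [|n IH] d /=; first lra.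
by have := IH d.+1; have := Rinv_0_lt_compat _ x_gt0; case: (P d); nra.
Qed.

Lemma gap_weight_prefix x d n : 1 < x ->
  gap_weight x d n = x ^ d.+1 * (bval_prefix x P (d + n) - bval_prefix x P d).
Proof.
move=> x_gt1; elim: n d => [|n IH] d /=; first by rewrite addn0; ring.
rewrite IH (_ : (d.+1 + n)%N = (d + n.+1)%N); last lia.
rewrite [bval_prefix x P d.+1]/= /digit_term [x ^ d.+2]/= [x ^ d.+1]/=.
have := pow_nonzero x d ltac:(lra).
by case: (P d) => ?; field; lra.
Qed.

Lemma gap_weight0 x n : 1 < x -> gap_weight x 0 n = x * bval_prefix x P n.
Proof. by move=> x_gt1; rewrite gap_weight_prefix // add0n /=; ring. Qed.

Local Notation B d n := (INR (count_words (gap_ok_after P d) n)).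
Local Notation Z n := (INR (count_words (gap_ok P) n)).

Let B_succ d n : B d n.+1 = B d.+1 n + (if P d then B 0 n else 0).
Proof. by rewrite count_gap_ok_afterS plus_INR; case: (P d). Qed.

Let Z_succ n : Z n.+1 = B 0 n + Z n.
Proof. by rewrite count_gap_okS plus_INR. Qed.

Lemma count_gap_ok_ge1 n : 1 <= Z n.
Proof.
elim: n => [|n IH]; first by rewrite count_words0 /=; lra.
by rewrite Z_succ; have := pos_INR (count_words (gap_ok_after P 0) n); lra.
Qed.

Section Upper.

Variable mu : R.
Hypothesis mu_gt1 : 1 < mu.
Hypothesis prefix_le1 : forall m, bval_prefix mu P m <= 1.

Let B0_upper n : (forall d, mu * B d n <= mu + INR n * mu ^ n * gap_weight mu d n) ->
  B 0 n <= 1 + INR n * mu ^ n.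
Proof.
move=> IH; have := IH 0%N; rewrite gap_weight0 //.
have := prefix_le1 n; have := pow_lt mu n ltac:(lra); have := pos_INR n.
have : INR n * mu ^ n * (mu * bval_prefix mu P n) <= INR n * mu ^ n * mu.
  apply: Rmult_le_compat_l; first by apply: Rmult_le_pos; [apply: pos_INR | apply: pow_le; lra].
  by have := prefix_le1 n; nra.
nra.
Qed.

Lemma count_gap_ok_after_upper n : forall d, mu * B d n <= mu + INR n * mu ^ n * gap_weight mu d n.
Proof.
elim: n => [|n IH] d; first by rewrite count_words0 /=; lra.
rewrite B_succ S_INR /=.
have := IH d.+1; have := B0_upper _ IH.
have := pow_lt mu n ltac:(lra); have := pow_R1_Rle mu n ltac:(lra); have := pos_INR n.
have := gap_weight_ge0 mu d.+1 n (Rlt_trans _ _ _ Rlt_0_1 mu_gt1).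
have : mu * / mu = 1 by field; lra.
move=> inv weight_ge0 n_ge0 pow_ge1 pow_gt0 B0 IHd.
have -> : (INR n + 1) * (mu * mu ^ n) * ((if P d then 1 else 0) + / mu * gap_weight mu d.+1 n) =
  (INR n + 1) * (mu * mu ^ n) * (if P d then 1 else 0) + (INR n + 1) * mu ^ n * gap_weight mu d.+1 n.
  by field; lra.
case: (P d); nra.
Qed.

Lemma count_gap_ok_upper n : Z n <= (INR n + 1) ^ 2 * mu ^ n.
Proof.
elim: n => [|n IH]; first by rewrite count_words0 /=; lra.
rewrite Z_succ S_INR; have := B0_upper _ (count_gap_ok_after_upper n).
have := pow_lt mu n ltac:(lra); have := pow_R1_Rle mu n ltac:(lra); have := pos_INR n.
rewrite /= => n_ge0 pow_ge1 pow_gt0 B0.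
have : (INR n + 1 + 1) * ((INR n + 1 + 1) * 1) * mu ^ n <=
       (INR n + 1 + 1) * ((INR n + 1 + 1) * 1) * (mu * mu ^ n) by apply: Rmult_le_compat_l; nra.
nra.
Qed.

End Upper.

Section Lower.

Variable lam : R.
Hypothesis lam_gt1 : 1 < lam.
Hypothesis prefix_ge : forall m, 1 - / lam ^ m / (lam - 1) <= bval_prefix lam P m.
Let al := (lam - 1) / lam.

Let al_gt0 : 0 < al.
Proof. by apply: Rdiv_lt_0_compat; lra. Qed.

Let B0_lower n : (forall d, 1 + al * lam ^ n * gap_weight lam d n <= B d n) ->
  al * lam ^ n.+1 <= B 0 n.
Proof.
move=> IH; have := IH 0%N; rewrite gap_weight0 //.
have := pow_lt lam n ltac:(lra) => pow_gt0.
have : al * lam ^ n * (lam * (1 - / lam ^ n / (lam - 1))) = al * lam ^ n.+1 - 1.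
  by rewrite /al /=; field; split; lra.
have : al * lam ^ n * (lam * (1 - / lam ^ n / (lam - 1))) <=
       al * lam ^ n * (lam * bval_prefix lam P n).
  by apply: Rmult_le_compat_l; [nra | apply: Rmult_le_compat_l; [lra | exact: prefix_ge]].
lra.
Qed.

Lemma count_gap_ok_after_lower n : forall d, 1 + al * lam ^ n * gap_weight lam d n <= B d n.
Proof.
elim: n => [|n IH] d; first by rewrite count_words0 /=; lra.
rewrite B_succ; have := IH d.+1; have := B0_lower _ IH.
have : lam * / lam = 1 by field; lra.
rewrite [gap_weight _ _ n.+1]/= [lam ^ n.+1]/=.
move=> inv B0 IHd.
have -> : al * (lam * lam ^ n) * ((if P d then 1 else 0) + / lam * gap_weight lam d.+1 n) =
  al * (lam * lam ^ n) * (if P d then 1 else 0) + al * lam ^ n * gap_weight lam d.+1 n.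
  by field; lra.
case: (P d); lra.
Qed.

Lemma count_gap_ok_lower n : al * lam ^ n.+1 <= Z n.+1.
Proof.
rewrite Z_succ; have := B0_lower _ (count_gap_ok_after_lower n).
by have := pos_INR (count_words (gap_ok P) n); lra.
Qed.

End Lower.

End WordCountBounds.

(** * Entropy of gap shifts *)

Lemma ln2_gt0 : 0 < ln 2.
Proof. by rewrite -ln_1; apply: ln_increasing; lra. Qed.

Lemma log2_le a b : 0 < a -> a <= b -> log2 a <= log2 b.
Proof.
move=> a_gt0 le_ab; apply: Rmult_le_compat_r; last exact: ln_le.
by apply: Rlt_le; apply: Rinv_0_lt_compat; exact: ln2_gt0.
Qed.

Lemma log2_lt a b : 0 < a -> a < b -> log2 a < log2 b.
Proof.
move=> a_gt0 lt_ab; apply: Rmult_lt_compat_r; last exact: ln_increasing.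
by apply: Rinv_0_lt_compat; exact: ln2_gt0.
Qed.

Lemma log2_1 : log2 1 = 0.
Proof. by rewrite /log2 ln_1 /Rdiv Rmult_0_l. Qed.

Lemma log2_2 : log2 2 = 1.
Proof. by rewrite /log2 /Rdiv Rinv_r //; have := ln2_gt0; lra. Qed.

Lemma log2_mul_pow_div a x n : 0 < a -> 0 < x ->
  log2 (a * x ^ n.+1) / INR n.+1 = log2 x + log2 a / INR n.+1.
Proof.
move=> a_gt0 x_gt0; rewrite /log2 ln_mult ?ln_pow //; last exact: pow_lt.
by have := lt_0_INR n.+1 ltac:(lia); have := ln2_gt0; move=> ? ?; field; lra.
Qed.

Lemma is_lim_seq_le_add {a r : nat -> R} {l b : R} :
  is_lim_seq a l -> (forall n, a n <= b + r n) -> is_lim_seq r 0 -> l <= b.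
Proof.
move=> lim_a le_ar lim_r.
have := is_lim_seq_le _ _ _ _ le_ar lim_a (is_lim_seq_plus' _ _ _ _ (is_lim_seq_const b) lim_r).
by rewrite /=; lra.
Qed.

Lemma is_lim_seq_ge_add {a r : nat -> R} {l b : R} :
  is_lim_seq a l -> (forall n, b + r n <= a n) -> is_lim_seq r 0 -> b <= l.
Proof.
move=> lim_a le_ra lim_r.
have := is_lim_seq_le _ _ _ _ le_ra (is_lim_seq_plus' _ _ _ _ (is_lim_seq_const b) lim_r) lim_a.
by rewrite /=; lra.
Qed.

Lemma is_lim_seq_inv_succ : is_lim_seq (fun n => / INR n.+1) 0.
Proof.
have lim_n : is_lim_seq (fun n => INR n.+1) p_infty.
  by apply/(is_lim_seq_incr_1 INR); exact: is_lim_seq_INR.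
exact: (is_lim_seq_inv _ _ lim_n ltac:(discriminate)).
Qed.

Lemma is_lim_seq_ln_div_succ : is_lim_seq (fun n => ln (INR n.+1) / INR n.+1) 0.
Proof.
have lim_n : is_lim_seq (fun n => INR n.+1) p_infty.
  by apply/(is_lim_seq_incr_1 INR); exact: is_lim_seq_INR.
apply: (is_lim_comp_seq (fun y => ln y / y) _ p_infty 0) => //; first exact: is_lim_div_ln_p.
by exists 0%N.
Qed.

Lemma is_lim_seq_scal_inv_succ c : is_lim_seq (fun n => c / INR n.+1) 0.
Proof. by have := is_lim_seq_scal_l _ c _ is_lim_seq_inv_succ; rewrite Rbar_mult_0_r. Qed.

Definition upper_error (n : nat) : R := log2 (4 * INR n.+1 ^ 2) / INR n.+1.

Lemma is_lim_seq_upper_error : is_lim_seq upper_error 0.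
Proof.
have := is_lim_seq_plus' _ _ _ _ (is_lim_seq_scal_inv_succ (ln 4 / ln 2))
  (is_lim_seq_scal_l _ (2 / ln 2) _ is_lim_seq_ln_div_succ).
rewrite Rmult_0_r Rplus_0_r; apply: is_lim_seq_ext => n.
have n_gt0 := lt_0_INR n.+1 ltac:(lia); have := ln2_gt0.
rewrite /upper_error /log2 ln_mult; [|lra|apply: pow_lt; lra].
by rewrite ln_pow // [INR 2]/= => ?; field; lra.
Qed.

Definition entropy_quotient (S : nat -> Prop) (n : nat) : R :=
  log2 (INR (nwords (gap_shift S) n.+1)) / INR n.+1.

Lemma entropy_quotient_upper S mu : 1 < mu -> bval mu (gapb S) <= 1 ->
  forall n, entropy_quotient S n <= log2 mu + upper_error n.
Proof.
move=> mu_gt1 le1 n.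
have prefix_le1 m : bval_prefix mu (gapb S) m <= 1.
  by have := bval_prefix_le mu_gt1 (gapb S) m; lra.
have := @count_gap_ok_upper (gapb S) mu mu_gt1 prefix_le1 n.+1; have := count_gap_ok_ge1 (gapb S) n.+1.
rewrite /entropy_quotient nwords_gap_shift => Z_ge1 Z_le.
have n1_ge1 : 1 <= INR n.+1 by apply: (le_INR 1); lia.
have n1_gt0 := lt_0_INR n.+1 ltac:(lia).
rewrite /upper_error -log2_mul_pow_div; [|nra|lra].
apply: Rmult_le_compat_r; first by apply: Rlt_le; apply: Rinv_0_lt_compat.
apply: log2_le; first lra.
apply: Rle_trans Z_le _; apply: Rmult_le_compat_r; first by apply: pow_le; lra.
have : INR n.+1 + 1 <= 2 * INR n.+1 by lra.
by rewrite /pow; nra.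
Qed.

Lemma entropy_quotient_lower S lam : 1 < lam -> 1 <= bval lam (gapb S) ->
  forall n, log2 lam + log2 ((lam - 1) / lam) / INR n.+1 <= entropy_quotient S n.
Proof.
move=> lam_gt1 ge1 n.
have prefix_ge m : 1 - / lam ^ m / (lam - 1) <= bval_prefix lam (gapb S) m.
  have := bval_decomp lam_gt1 (gapb S) m; have := bval_bounds lam_gt1 (shift m (gapb S)).
  have : 0 < / lam ^ m by apply: Rinv_0_lt_compat; apply: pow_lt; lra.
  rewrite /Rdiv; nra.
have := @count_gap_ok_lower (gapb S) lam lam_gt1 prefix_ge n.
have al_gt0 : 0 < (lam - 1) / lam by apply: Rdiv_lt_0_compat; lra.
rewrite /entropy_quotient nwords_gap_shift -log2_mul_pow_div //; last lra.
move=> Z_ge; apply: Rmult_le_compat_r.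
  by apply: Rlt_le; apply: Rinv_0_lt_compat; apply: lt_0_INR; lia.
by apply: log2_le => //; apply: Rmult_lt_0_compat => //; apply: pow_lt; lra.
Qed.

Theorem gap_shift_entropy S lam : 1 < lam ->
  has_entropy (gap_shift S) (log2 lam) <-> bval lam (gapb S) = 1.
Proof.
move=> lam_gt1; split=> [/is_lim_seq_Reals lim|one].
- case: (Rtotal_order (bval lam (gapb S)) 1) => [lt1|[//|gt1]]; exfalso.
  + have [mu [mu_range mu_lt]] :=
      @bval_near_below lam (gapb S) (1 - bval lam (gapb S)) lam_gt1 ltac:(lra).
    have := is_lim_seq_le_add lim (@entropy_quotient_upper S mu (proj1 mu_range) ltac:(lra))
      is_lim_seq_upper_error.
    by have := @log2_lt mu lam ltac:(lra) (proj2 mu_range); lra.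
  + have [mu [lt_mu mu_gt]] := @bval_near_above lam (gapb S) (bval lam (gapb S) - 1) lam_gt1 ltac:(lra).
    have := is_lim_seq_ge_add lim (@entropy_quotient_lower S mu ltac:(lra) ltac:(lra))
      (is_lim_seq_scal_inv_succ _).
    by have := @log2_lt lam mu ltac:(lra) lt_mu; lra.
- apply/is_lim_seq_Reals.
  apply: (is_lim_seq_le_le (fun n => log2 lam + log2 ((lam - 1) / lam) / INR n.+1) _
    (fun n => log2 lam + upper_error n)).
  + by move=> n; split; [apply: entropy_quotient_lower | apply: entropy_quotient_upper]; lra.
  + have := is_lim_seq_plus' _ _ _ _ (is_lim_seq_const (log2 lam)) (is_lim_seq_scal_inv_succ _).
    by rewrite Rplus_0_r.
  + have := is_lim_seq_plus' _ _ _ _ (is_lim_seq_const (log2 lam)) is_lim_seq_upper_error.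
    by rewrite Rplus_0_r.
Qed.

Lemma shift_space_ext (X : (Z -> bool) -> Prop) S :
  (forall x, X x <-> gap_shift S x) -> X = gap_shift S.
Proof.
by move=> eqX; apply: functional_extensionality => x; apply: propositional_extensionality.
Qed.

Lemma gap_shift_ext S1 S2 : (forall s, S1 s <-> S2 s) -> forall x, gap_shift S1 x <-> gap_shift S2 x.
Proof. by move=> eqS x; split=> shift_x i j lt_ij xi xj zeros; apply/eqS; apply: shift_x. Qed.

Definition two_ones (s : nat) : Z -> bool := fun z => ((z =? 0) || (z =? Z.of_nat s.+1))%Z.

Lemma gap_shift_two_ones S s : gap_shift S (two_ones s) <-> S s.
Proof.
have gap : Z.to_nat (Z.of_nat s.+1 - 0 - 1) = s by lia.
split=> [shift_x|Ss i j lt_ij].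
- have := shift_x 0%Z (Z.of_nat s.+1) ltac:(lia); rewrite gap /two_ones; apply.
  + by rewrite Z.eqb_refl.
  + by rewrite Z.eqb_refl orbT.
  + by move=> k lt_k; apply/negbTE/negP => /orP [/Z.eqb_eq|/Z.eqb_eq]; lia.
- rewrite /two_ones => /orP [/Z.eqb_eq ei|/Z.eqb_eq ei] /orP [/Z.eqb_eq ej|/Z.eqb_eq ej] _;
    rewrite ei ej in lt_ij *; try lia.
  by rewrite gap.
Qed.

Lemma gap_shift_inj S1 S2 : (forall x, gap_shift S1 x <-> gap_shift S2 x) -> forall s, S1 s <-> S2 s.
Proof. by move=> eqX s; rewrite -!gap_shift_two_ones. Qed.

Lemma gapb_bstream (c : bstream) : gapb (fun s => c s = true) = c.
Proof.
apply: functional_extensionality => s; rewrite /gapb.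
by case cs: (c s); [apply/pboolP | apply/negbTE/negP => /pboolP cs1; rewrite cs1 in cs].
Qed.

Lemma bval_has_one {l c} : 1 < l -> bval l c = 1 -> exists j, c j = true.
Proof.
move=> l_gt1 one; apply: NNPP => no_one.
have zeros j : digit_term l c j = 0 * digit_term l c j.
  by rewrite /digit_term; case cj: (c j); [case: no_one; exists j | ring].
by move: one; rewrite /bval (Series_ext _ _ zeros) Series_scal_l; lra.
Qed.

Lemma gap_shift_has_entropy_iff {X : (Z -> bool) -> Prop} {S lam} : 1 < lam ->
  (forall x, X x <-> gap_shift S x) -> has_entropy X (log2 lam) <-> bval lam (gapb S) = 1.
Proof. by move=> lam_gt1 /shift_space_ext ->; exact: gap_shift_entropy. Qed.

Lemma unique_gap_shift_at_kl_root L : 1 < L -> bval L kl = 1 ->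
  unique_gap_shift_with_entropy (log2 L).
Proof.
move=> L_gt1 L_one; set S := fun s => kl s = true.
exists (gap_shift S); split; first by exists S; split=> //; exists 0%N.
split; first by rewrite gap_shift_entropy // gapb_bstream.
move=> Y [S' [_ Y_S']] /(gap_shift_has_entropy_iff L_gt1 Y_S').
move=> /(kl_unique_expansion _ L_gt1 L_one) eq_kl.
move=> x; rewrite Y_S'; apply: gap_shift_ext => s.
by rewrite /S -eq_kl /gapb pboolP.
Qed.

Definition exp2 (q : R) : R := exp (q * ln 2).

Lemma log2_exp2 q : log2 (exp2 q) = q.
Proof. by rewrite /log2 /exp2 ln_exp; have := ln2_gt0; move=> ?; field; lra. Qed.

Lemma exp2_range q : 0 < q < 1 -> 1 < exp2 q < 2.
Proof.
move=> q_range; have := ln2_gt0 => ln2_pos.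
rewrite /exp2 -exp_0 -{3}(exp_ln 2); last lra.
by split; apply: exp_increasing; nra.
Qed.

Lemma unique_gap_shift_entropy_ge L q : 1 < L -> bval L kl = 1 -> 0 < q < 1 ->
  unique_gap_shift_with_entropy q -> log2 L <= q.
Proof.
move=> L_gt1 L_one q_range [X [[S [_ X_S]] [entX X_unique]]].
have lam_range := exp2_range q q_range; rewrite -(log2_exp2 q) in entX X_unique *.
have one := proj1 (gap_shift_has_entropy_iff (proj1 lam_range) X_S) entX.
have unique d : bval (exp2 q) d = 1 -> d = gapb S.
  move=> d_one; set Sd := fun s => d s = true.
  have [j dj] := bval_has_one (proj1 lam_range) d_one.
  have := X_unique (gap_shift Sd); rewrite gap_shift_entropy ?gapb_bstream; last lra.
  move=> /(_ _ d_one) X_eq.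
  have eqX : forall x, gap_shift Sd x <-> X x by apply: X_eq; exists Sd; split=> //; exists j.
  have eqS := gap_shift_inj _ _ (fun x => iff_trans (eqX x) (X_S x)).
  rewrite -(gapb_bstream d); congr gapb.
  by apply: functional_extensionality => s; apply: propositional_extensionality; exact: eqS.
apply: log2_le; first lra.
have lam_range' : 1 < exp2 q <= 2 by lra.
exact: unique_expansion_base_ge lam_range' L_one one unique.
Qed.

Theorem theorem4p9 :
  exists lamKL : R,
    (1 < lamKL < 2)%R /\ TM_equation lamKL /\
    (forall mu : R, (1 < mu < 2)%R -> TM_equation mu -> mu = lamKL) /\
    (0 < log2 lamKL < 1)%R /\
    unique_gap_shift_with_entropy (log2 lamKL) /\
    (forall q : R, (0 < q < 1)%R -> unique_gap_shift_with_entropy q ->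
       (log2 lamKL <= q)%R).
Proof.
have [L [L_range L_one]] := kl_root_exists.
have L_gt1 : 1 < L by lra.
exists L; split=> //; split; first exact/(TM_equation_bval_kl L_gt1).
split.
  move=> mu mu_range /(TM_equation_bval_kl (proj1 mu_range)) mu_one.
  exact: kl_root_unique (proj1 mu_range) L_gt1 mu_one L_one.
split.
  by split; [rewrite -log2_1 | rewrite -log2_2]; apply: log2_lt; lra.
split; first exact: unique_gap_shift_at_kl_root.
by move=> q; apply: unique_gap_shift_entropy_ge.
Qed.
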